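(* Let $k\ge1$, $IS\in\{\Box,\blacksquare\}^k$, and let $\tau$ be a correct compositional translation from $\mathrm{SYNCSIMPLE}$ into $\mathrm{LOCKSIMPLE}_{k,IS}$. Then there is a reduction sequence of $\tau(!)0\mid\tau(?)0$ starting from the store $IS$ that executes every symbol of $\tau(!)$ and of $\tau(?)$.
   Context: $\mathrm{SYNCSIMPLE}$: subprocesses $\mathcal{U} ::= \checkmark \mid 0 \mid\, !\mathcal{U} \mid\, ?\mathcal{U}$; processes are finite parallel compositions ($\mid$ associative, commutative, $0$ a unit). Reduction: $!\mathcal{U}_1\mid ?\mathcal{U}_2\mid \mathcal{P}\to \mathcal{U}_1\mid\mathcal{U}_2\mid\mathcal{P}$. Successful: of form $\checkmark\mid\mathcal{P}$; may-convergent: reduces to a successful process; must-convergent: every reachable process is may-convergent. $\mathrm{LOCKSIMPLE}_{k,IS}$ ($IS\in\{\Box,\blacksquare\}^k$, $\Box$ empty, $\blacksquare$ full): subprocesses are words over $\{P_1,T_1,\dots,P_k,T_k\}$ followed by $0$ or $\checkmark$; states $(\mathcal{P},C)$ reduce by $(P_i\mathcal{U}\mid\mathcal{P},C)\to(\mathcal{U}\mid\mathcal{P},C[C_i:=\blacksquare])$ only if $C_i=\Box$, and $(T_i\mathcal{U}\mid\mathcal{P},C)\to(\mathcal{U}\mid\mathcal{P},C[C_i:=\Box])$ always. Success = process contains $\checkmark$; a process $\mathcal{P}$ is may/must-convergent iff the state $(\mathcal{P},IS)$ is. A compositional translation $\tau$ is given by words $\tau(!),\tau(?)$ with $\tau(0)=0$,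 $\tau(\checkmark)=\checkmark$, $\tau(!\mathcal{U})=\tau(!)\tau(\mathcal{U})$, $\tau(?\mathcal{U})=\tau(?)\tau(\mathcal{U})$, $\tau$ commuting with $\mid$; correct = preserves and reflects may- and must-convergence. *)

From mathcomp Require Import all_boot.
From Stdlib Require Import Permutation.
Set Implicit Arguments. Unset Strict Implicit. Unset Printing Implicit Defensive.

Inductive star (S : Type) (R : S -> S -> Prop) : S -> S -> Prop :=
| star_refl x : star R x x
| star_step x y z : R x y -> star R y z -> star R x z.

Inductive sproc := SCheck | SZero | SSend of sproc | SRecv of sproc.

(* processes: finite parallel compositions, as lists (order irrelevant) *)
Definition sprocess := seq sproc.

Definition sync_step (P Q : sprocess) : Prop :=
  exists U1 U2 R, Permutation P (SSend U1 :: SRecv U2 :: R) /\ Q = U1 :: U2 :: R.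

Definition sync_success (P : sprocess) : Prop := List.In SCheck P.

Definition sync_may (P : sprocess) : Prop :=
  exists Q, star sync_step P Q /\ sync_success Q.

Definition sync_must (P : sprocess) : Prop :=
  forall Q, star sync_step P Q -> sync_may Q.

Inductive lact (k : nat) := LP of 'I_k | LT of 'I_k.

(* subprocess: a word of actions followed by 0 (false) or a check (true) *)
Definition lsub (k : nat) := (seq (lact k) * bool)%type.
Definition lprocess (k : nat) := seq (lsub k).
(* store: true = full (black square), false = empty (white square) *)
Definition lstore (k : nat) := {ffun 'I_k -> bool}.
Definition lstate (k : nat) := (lprocess k * lstore k)%type.

Definition setc (k : nat) (C : lstore k) (i : 'I_k) (b : bool) : lstore k :=
  [ffun j => if j == i then b else C j].

Inductive lock_step (k : nat) : lstate k -> lstate k -> Prop :=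
| lstep_P A B (i : 'I_k) w e (C : lstore k) :
    C i = false ->
    lock_step (A ++ (LP i :: w, e) :: B, C) (A ++ (w, e) :: B, setc C i true)
| lstep_T A B (i : 'I_k) w e (C : lstore k) :
    lock_step (A ++ (LT i :: w, e) :: B, C) (A ++ (w, e) :: B, setc C i false).

Definition lock_success (k : nat) (S : lstate k) : Prop :=
  List.In ([::], true) S.1.

Definition lock_may (k : nat) (S : lstate k) : Prop :=
  exists S', star (@lock_step k) S S' /\ lock_success S'.

Definition lock_must (k : nat) (S : lstate k) : Prop :=
  forall S', star (@lock_step k) S S' -> lock_may S'.

Fixpoint tr_sub (k : nat) (ts tr : seq (lact k)) (U : sproc) : lsub k :=
  match U with
  | SCheck => ([::], true)
  | SZero => ([::], false)
  | SSend U' => let p := tr_sub ts tr U' in (ts ++ p.1, p.2)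
  | SRecv U' => let p := tr_sub ts tr U' in (tr ++ p.1, p.2)
  end.

Definition tr_proc (k : nat) (ts tr : seq (lact k)) (P : sprocess) : lprocess k :=
  map (tr_sub ts tr) P.

(* tau given by tau(!) = ts, tau(?) = tr is correct w.r.t. initial store IS *)
Definition correct_translation (k : nat) (IS : lstore k) (ts tr : seq (lact k)) : Prop :=
  forall P : sprocess,
    (sync_may P <-> lock_may (tr_proc ts tr P, IS)) /\
    (sync_must P <-> lock_must (tr_proc ts tr P, IS)).

(* Correctness applied to two processes pins down the translated sender and receiver.
   [!✓ | ?0] is may-convergent, so from [τ(!)✓ | τ(?)0] the lock store lets the sender
   run all of τ(!), the receiver having executed some prefix of τ(?).  Lock reductions
   never look at the end markers, so the same steps lead from [τ(!)0 | τ(?)✓] to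
   [0 | w✓] for a suffix w of τ(?).  This state is reachable from the translation of
   [!0 | ?✓], which is must-convergent, so it may reach success: the receiver finishes
   w while the exhausted sender stays idle.  Erasing the markers once more gives the
   required run of [τ(!)0 | τ(?)0]. *)

From Stdlib Require Import Permutation.
From mathcomp Require Import all_boot.

Set Implicit Arguments.
Unset Strict Implicit.
Unset Printing Implicit Defensive.

Lemma star_trans (S : Type) (R : S -> S -> Prop) x y z :
  star R x y -> star R y z -> star R x z.
Proof. by elim=> // x0 y0 z0 Rxy _ IH /IH; apply: star_step. Qed.

Lemma sync_step_success P Q : sync_step P Q -> sync_success P -> sync_success Q.
Proof.
rewrite /sync_success => -[U1 [U2 [R [permP ->]]]] /(Permutation_in _ permP) /=.
by case=> [|[|inR]] //; right; right.
Qed.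

Lemma sync_star_success P Q : star sync_step P Q -> sync_success P -> sync_success Q.
Proof. by elim=> // P0 P1 P2 /sync_step_success step01 _ IH /step01. Qed.

Lemma sync_may_success P : sync_success P -> sync_may P.
Proof. by exists P; split; first exact: star_refl. Qed.

Lemma sync_may_send_check U : sync_may [:: SSend SCheck; SRecv U].
Proof.
exists [:: SCheck; U]; split; last by left.
by apply: star_step (star_refl _ _); exists SCheck, U, [::].
Qed.

Lemma sync_must_recv_check U : sync_must [:: SSend U; SRecv SCheck].
Proof.
have stepP Q : sync_step [:: SSend U; SRecv SCheck] Q -> sync_success Q.
  case=> U1 [U2 [R [permP ->]]]; rewrite /sync_success /=.
  have : List.In (SRecv U2) [:: SSend U; SRecv SCheck].
    by apply: Permutation_in (Permutation_sym permP) _; right; left.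
  by case=> [|[[<-]|]] //; right; left.
move=> Q; move eP: [:: SSend U; SRecv SCheck] => P red.
case: red eP => [_ <-|P0 P1 {}Q step01 red1 eP0]; last first.
  rewrite -eP0 in step01; apply: sync_may_success.
  exact: sync_star_success red1 (stepP _ step01).
exists [:: U; SCheck]; split; last by right; left.
by apply: star_step (star_refl _ _); exists U, SCheck, [::].
Qed.

Section LockReductions.

Variable k : nat.
Implicit Types (S T : lstate k) (C D : lstore k).

Definition lact_step (x : lact k) C D : Prop :=
  match x with
  | LP i => C i = false /\ D = setc C i true
  | LT i => D = setc C i false
  end.

Lemma lock_stepP S T :
  lock_step S T <->
  exists A B x w e, [/\ S.1 = A ++ (x :: w, e) :: B, T.1 = A ++ (w, e) :: B
                      & lact_step x S.2 T.2].
Proof.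
split.
  case=> A B i w e C; first move=> Ci.
    by exists A, B, (LP i), w, e.
  by exists A, B, (LT i), w, e.
case: S T => [P C] [Q D] [A [B [[] i [w [e [/= -> ->]]]]]]; last by move->; apply: lstep_T.
by case=> Ci ->; apply: lstep_P.
Qed.

Lemma lock_step_markers S T : lock_step S T -> unzip2 T.1 = unzip2 S.1.
Proof. by case/lock_stepP=> A [B [x [w [e [-> -> _]]]]]; rewrite /unzip2 !map_cat. Qed.

Lemma lock_step_size_words S T j :
  lock_step S T -> size (nth [::] (unzip1 T.1) j) <= size (nth [::] (unzip1 S.1) j).
Proof.
case/lock_stepP=> A [B [x [w [e [-> -> _]]]]]; rewrite /unzip1 !map_cat !nth_cat size_map.
by case: ifP => // _; case: (j - size A) => /=.
Qed.

Lemma zip_unzip1_cat_cons (T1 T2 T3 : Type) (A B : seq (T1 * T2)) p q (fs : seq T3) :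
  size fs = size (A ++ p :: B) ->
  exists A' B' f, zip (unzip1 (A ++ p :: B)) fs = A' ++ (p.1, f) :: B' /\
                  zip (unzip1 (A ++ q :: B)) fs = A' ++ (q.1, f) :: B'.
Proof.
elim: A fs => [|a A IH] [|f fs] //= [sz_fs].
  by exists [::], (zip (unzip1 B) fs), f.
have [A' [B' [f' [-> ->]]]] := IH fs sz_fs.
by exists ((a.1, f) :: A'), B', f'.
Qed.

Lemma lock_step_replace_markers S T fs :
  lock_step S T -> size fs = size S.1 ->
  lock_step (zip (unzip1 S.1) fs, S.2) (zip (unzip1 T.1) fs, T.2).
Proof.
case/lock_stepP=> A [B [x [w [e [-> -> xCD]]]]].
case/(zip_unzip1_cat_cons (w, e))=> A' [B' [f [-> ->]]].
by apply/lock_stepP; exists A', B', x, w, f.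
Qed.

Lemma lock_star_markers S T : star (@lock_step k) S T -> unzip2 T.1 = unzip2 S.1.
Proof. by elim=> // S0 S1 S2 /lock_step_markers <-. Qed.

Lemma lock_star_size_words S T j :
  star (@lock_step k) S T ->
  size (nth [::] (unzip1 T.1) j) <= size (nth [::] (unzip1 S.1) j).
Proof.
elim=> // S0 S1 S2 /(lock_step_size_words j) le10 _ le21.
exact: leq_trans le21 le10.
Qed.

Lemma lock_star_replace_markers S T fs :
  star (@lock_step k) S T -> size fs = size S.1 ->
  star (@lock_step k) (zip (unzip1 S.1) fs, S.2) (zip (unzip1 T.1) fs, T.2).
Proof.
elim=> [S0|S0 S1 S2 step01 _ IH] sz_fs; first exact: star_refl.
apply: star_step (lock_step_replace_markers step01 sz_fs) (IH _).
by move: (congr1 size (lock_step_markers step01)); rewrite !size_map sz_fs.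
Qed.

Lemma lock_star_pair a b e1 e2 C S :
  star (@lock_step k) ([:: (a, e1); (b, e2)], C) S ->
  exists a' b' D,
    [/\ S = ([:: (a', e1); (b', e2)], D), size a' <= size a
      & forall f1 f2, star (@lock_step k) ([:: (a, f1); (b, f2)], C)
                                          ([:: (a', f1); (b', f2)], D)].
Proof.
move=> red; have := lock_star_markers red; have := lock_star_size_words 0 red.
have := lock_star_replace_markers (fs := [:: _; _]) red erefl.
case: S red => [[|[a' f1'] [|[b' f2'] [|]]] D] //= _ replaced le_a' [-> ->].
by exists a', b', D; split=> // f1 f2; apply: replaced.
Qed.

End LockReductions.

Theorem lemma4p1 (k : nat) (IS : lstore k) (ts tr : seq (lact k)) :
  (0 < k)%N ->
  correct_translation IS ts tr ->
  exists C : lstore k,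
    star (@lock_step k)
      ([:: (ts, false); (tr, false)], IS)
      ([:: ([::], false); ([::], false)], C).
Proof.
move=> _ correct.
have [[may_send_check _] _] := correct [:: SSend SCheck; SRecv SZero].
have [_ [must_recv_check _]] := correct [:: SSend SZero; SRecv SCheck].
rewrite /tr_proc /= !cats0 in may_send_check must_recv_check.
have [S1 [red1 succ1]] := may_send_check (@sync_may_send_check SZero).
have [a1 [b1 [C1 [eS1 _ run1]]]] := lock_star_pair red1.
have a1_nil : a1 = [::] by move: succ1; rewrite eS1 => -[[]|[|[]]].
rewrite a1_nil in run1.
have [S2 [red2 succ2]] := must_recv_check (@sync_must_recv_check SZero) _ (run1 false true).
have [a2 [b2 [C2 [eS2 size_a2 run2]]]] := lock_star_pair red2.
have a2_nil : a2 = [::] by case: a2 size_a2 {eS2 run2}.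
have b2_nil : b2 = [::] by move: succ2; rewrite eS2 => -[[]|[[]|[]]].
exists C2; rewrite a2_nil b2_nil in run2.
exact: star_trans (run1 false false) (run2 false false).
Qed.
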